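(* Let $p$ be a prime and $G_p=\mathbb{Z}_{p^{r_1}}^{k_1}\oplus\cdots\oplus\mathbb{Z}_{p^{r_n}}^{k_n}$ a finite abelian $p$-group with $r_1<\cdots<r_n$, $k_i\ge1$. If $g$ and $h$ are representative elements of $G_p$ that are automorphically equivalent (under an automorphism of $G_p$), then $g=h$. Consequently every element of $G_p$ is automorphically equivalent to a unique representative element of $G_p$.
   Context: Two elements are automorphically equivalent if some group automorphism maps one to the other. Elements of $\mathbb{Z}_{p^r}$ are identified with integers in $\{0,\dots,p^r-1\}$; a power of $p$ in $\mathbb{Z}_{p^r}$ means $p^s$ with $0\le s<r$. The repeat-free subgroup of $G_p$ is $G_p^{rf}=\mathbb{Z}_{p^{r_1}}\oplus\cdots\oplus\mathbb{Z}_{p^{r_n}}$, one copy of each distinct cyclic factor (direct summand of $G_p$). An element $g=(g_1,\dots,g_n)\in G_p^{rf}$ is a representative element of $G_p^{rf}$ if (1) every $g_i$ is $0$ or a power of $p$; (2) for all $i<j$ with $g_i,g_j$ nonzero, $g_i<g_j$; (3) for all $i<j$ with $g_i,g_j$ nonzero, the order of $g_i$ in $\mathbb{Z}_{p^{r_i}}$ is less than the order of $g_j$ in $\mathbb{Z}_{p^{r_j}}$. A representative element of $G_p$ is an element of $G_p^{rf}$ (all other coordinates $0$) which is a representative element of $G_p^{rf}$. *)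

From HB Require Import structures.
From mathcomp Require Import all_boot all_order all_algebra all_fingroup.
Set Implicit Arguments. Unset Strict Implicit. Unset Printing Implicit Defensive.

(* Index set of the cyclic factors: pairs (i, j) with i < n, j < k i. *)
Definition Gidx (n : nat) (k : 'I_n -> nat) := {i : 'I_n & 'I_(k i)}.

Definition Gp (p n : nat) (r k : 'I_n -> nat) :=
  {dffun forall x : Gidx k, 'Z_(p ^ r (tag x))}.

Definition Gadd p n (r k : 'I_n -> nat) (a b : Gp p r k) : Gp p r k :=
  finfun (fun x => (a x + b x)%R).

Definition is_aut p n (r k : 'I_n -> nat) (f : Gp p r k -> Gp p r k) : Prop :=
  bijective f /\ forall a b, f (Gadd a b) = Gadd (f a) (f b).

Definition aut_equiv p n (r k : 'I_n -> nat) (g h : Gp p r k) : Prop :=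
  exists f, is_aut f /\ f g = h.

(* g lies in the repeat-free subgroup: only the first copy of each factor
   may be nonzero. *)
Definition in_rf p n (r k : 'I_n -> nat) (g : Gp p r k) : Prop :=
  forall x : Gidx k, 0 < val (tagged x) -> g x = 0%R.

Definition zero_or_ppow (p r : nat) (a : 'Z_(p ^ r)) : Prop :=
  a = 0%R \/ exists2 s, s < r & val a = p ^ s.

Definition representative p n (r k : 'I_n -> nat) (g : Gp p r k) : Prop :=
  [/\ in_rf g,
      (forall x : Gidx k, val (tagged x) = 0 -> zero_or_ppow (g x))
    & (forall x y : Gidx k, val (tagged x) = 0 -> val (tagged y) = 0 ->
        tag x < tag y -> g x != 0%R -> g y != 0%R ->
        val (g x) < val (g y) /\ (#[g x]%g < #[g y]%g)%N)].

From HB Require Import structures.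
From mathcomp Require Import all_boot all_order all_algebra all_fingroup all_solvable.
From mathcomp Require Import zify.
From Stdlib Require Import Classical.
Set Implicit Arguments. Unset Strict Implicit. Unset Printing Implicit Defensive.
Import GRing.Theory.

(* For a, t : nat the property "p^t g lies in p^a G" is
   preserved by additive bijections, hence is an automorphism invariant of g.
   When every coordinate of g is 0 or a power of p, it holds iff no
   coordinate p^s of g in a factor Z_{p^R} has t + s < R and t + s < a.
   Call g separated if no nonzero coordinate p^sc dominates another one p^sd
   (sc <= sd and r_d - sd <= r_c - sc).  For separated g, three such
   invariants ("corner R s") detect whether g has a coordinate p^s in a
   factor of exponent R.  Representative elements are exactly the separated
   elements with coordinates 0 or powers of p supported on first copies, so
   they are determined by their invariants.

   Scaling coordinates by units makes them 0 or powers of p.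
   Transvections x_d += m x_c then clear a dominated coordinate, or move a
   coordinate of a repeated copy to the first copy of its factor; a weighted
   count of the nonzero coordinates decreases, so iterating these steps ends
   at a representative element. *)

Section ZpArith.
Variable m : nat.
Hypothesis m_gt1 : 1 < m.

(* Arithmetic of 'Z_m read on the canonical representatives in [0, m);
   the first two lemmas are val_Zp_nat and natr_Zp phrased with the generic
   projection val, the form in which coordinates are compared. *)
Lemma Zp_val_nat N : val (N%:R : 'Z_m)%R = N %% m.
Proof. exact: val_Zp_nat. Qed.

Lemma Zp_natr_val (a : 'Z_m) : (val a)%:R%R = a.
Proof. exact: natr_Zp. Qed.

Lemma Zp_val_lt (a : 'Z_m) : val a < m.
Proof. by case: a => v /=; rewrite Zp_cast. Qed.

Lemma Zp_valD (a b : 'Z_m) : val (a + b)%R = (val a + val b) %% m.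
Proof. by rewrite -[in LHS](natr_Zp a) -[in LHS](natr_Zp b) -natrD Zp_val_nat. Qed.

Lemma Zp_valMn (a : 'Z_m) t : val (a *+ t)%R = val a * t %% m.
Proof. by rewrite -[in LHS](natr_Zp a) -mulrnA Zp_val_nat. Qed.

Lemma Zp_order (a : 'Z_m) : #[a]%g = m %/ gcdn m (val a).
Proof.
have E : a = (Zp1 ^+ val a)%g by rewrite Zp1_expgz.
by rewrite {1}E orderXgcd order_Zp1; case: a {E} => v /=; rewrite Zp_cast.
Qed.

End ZpArith.

Section ZpPrimePower.
Variable p : nat.
Hypothesis p_prime : prime p.

Lemma expn_prime_gt1 R : 0 < R -> 1 < p ^ R.
Proof. by move=> R_gt0; rewrite -(expn0 p) ltn_exp2l ?prime_gt1. Qed.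

Lemma expn_prime_inj : injective (expn p).
Proof. by move=> a b /eqP; rewrite eqn_exp2l ?prime_gt1 // => /eqP. Qed.

Variable R : nat.
Hypothesis R_gt0 : 0 < R.
Local Notation Z := 'Z_(p ^ R).

Lemma Zp_ppow_lt (c : Z) s : val c = p ^ s -> s < R.
Proof.
move=> cE; have := Zp_val_lt (expn_prime_gt1 R_gt0) c.
by rewrite cE ltn_exp2l ?prime_gt1.
Qed.

Lemma Zp_ppow_neq0 (c : Z) s : val c = p ^ s -> c != 0%R.
Proof.
move=> cE; apply/eqP => c0; move: cE; rewrite c0 /= => E.
by have := expn_gt0 p s; rewrite (prime_gt0 p_prime) -E.
Qed.

Lemma Zp_order_ppow (c : Z) s : val c = p ^ s -> #[c]%g = p ^ (R - s).
Proof.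
move=> cE; have sR := ltnW (Zp_ppow_lt cE).
rewrite (Zp_order (expn_prime_gt1 R_gt0)) cE (gcdn_idPr (dvdn_exp2l p sR)).
by rewrite expnB ?prime_gt0.
Qed.

(* Every element of Z_{p^R} becomes 0 or a power of p after multiplication
   by a unit: a = w p^s with w coprime to p. *)
Lemma Zp_unit_ppow (a : Z) :
  exists u : Z, u \is a GRing.unit /\ zero_or_ppow (a * u)%R.
Proof.
have M_gt1 := expn_prime_gt1 R_gt0.
have [->|a_neq0] := eqVneq a 0%R; first by exists 1%R; split; [exact: unitr1 | left; rewrite mul0r].
have a_gt0 : 0 < val a by rewrite lt0n; apply: contra a_neq0 => /eqP a0; apply/eqP/val_inj.
have [w w_coprime aE] := pfactor_coprime p_prime a_gt0.
set s := logn p (val a) in aE.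
have w_unit : (w%:R : Z)%R \is a GRing.unit by rewrite unitZpE // coprimeXl // coprime_sym.
have ps_lt : p ^ s < p ^ R.
  apply: leq_ltn_trans (Zp_val_lt M_gt1 a); rewrite aE leq_pmull // lt0n.
  by apply: contraTneq a_gt0 => w0; rewrite aE w0.
exists (w%:R)^-1%R; split; first by rewrite unitrV.
right; exists s; first by rewrite -(ltn_exp2l _ _ (prime_gt1 p_prime)).
by rewrite -[a]Zp_natr_val aE natrM mulrC mulrA mulVr // mul1r Zp_val_nat ?modn_small.
Qed.

Lemma Zp_pmul_memP (c : Z) a t : zero_or_ppow c ->
  (exists y : Z, c *+ p ^ t = y *+ p ^ a)%R <->
  ~ exists s, [/\ val c = p ^ s, t + s < R & t + s < a].
Proof.
have M_gt1 := expn_prime_gt1 R_gt0; have p_gt1 := prime_gt1 p_prime.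
move=> c_ppow; split.
  move=> [y /(congr1 val)] + [s [cE tsR tsa]].
  have st_lt : p ^ (s + t) < p ^ R by rewrite ltn_exp2l // addnC.
  rewrite !Zp_valMn // cE -expnD modn_small // => E.
  (* p^(s+t+1) divides p^R and y p^a, hence the residue p^(s+t): absurd. *)
  have dvd_R : p ^ (s + t).+1 %| p ^ R by rewrite dvdn_Pexp2l // addnC.
  have dvd_y : p ^ (s + t).+1 %| val y * p ^ a by rewrite dvdn_mull // dvdn_Pexp2l // addnC.
  have : p ^ (s + t).+1 %| p ^ (s + t) by rewrite E /dvdn (modn_dvdm _ dvd_R).
  by rewrite dvdn_Pexp2l // ltnn.
case: c_ppow => [-> _|[s _ cE] no_obs]; first by exists 0%R; rewrite !mul0rn.
have [tsR|] := leqP R (t + s).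
  exists 0%R; apply: val_inj; rewrite Zp_valMn // cE mul0rn /= -expnD.
  by apply/eqP; change (p ^ R %| p ^ (s + t)); rewrite dvdn_Pexp2l // addnC.
move=> tsR; have ats : a <= t + s by rewrite leqNgt; apply: contra_notN no_obs => tsa; exists s.
exists ((p ^ (t + s - a))%:R)%R; apply: val_inj.
rewrite Zp_valMn // -mulrnA Zp_val_nat // cE -!expnD.
by congr (p ^ _ %% _); lia.
Qed.

End ZpPrimePower.

Section Representatives.
Variables (p n : nat) (r k : 'I_n -> nat).
Hypothesis p_prime : prime p.
Hypothesis r_gt0 : forall i, 0 < r i.
Hypothesis r_mono : forall i j : 'I_n, i < j -> r i < r j.
Hypothesis k_gt0 : forall i, 0 < k i.

Local Notation G := (Gp p r k).
Local Notation I := (Gidx k).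
Local Notation exponent x := (r (tag x)).

Let M_gt1 (x : I) : 1 < p ^ exponent x := expn_prime_gt1 p_prime (r_gt0 _).

Definition gmuln (t : nat) (g : G) : G := finfun (fun x => g x *+ t)%R.

Definition additive_map (f : G -> G) := forall a b, f (Gadd a b) = Gadd (f a) (f b).

Lemma additive_map_muln (f : G -> G) t g : additive_map f -> f (gmuln t.+1 g) = gmuln t.+1 (f g).
Proof.
move=> f_add; elim: t g => [|t IHt] g.
  have muln1 (b : G) : gmuln 1 b = b by apply/ffunP => x; rewrite ffunE mulr1n.
  by rewrite !muln1.
have mulnS (b : G) : gmuln t.+2 b = Gadd b (gmuln t.+1 b).
  by apply/ffunP => x; rewrite !ffunE mulrS.
by rewrite mulnS f_add IHt -mulnS.
Qed.

Lemma aut_equiv_refl (g : G) : aut_equiv g g.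
Proof. by exists id; split=> //; split=> //; exists id. Qed.

Lemma aut_equiv_sym (g h : G) : aut_equiv g h -> aut_equiv h g.
Proof.
move=> [f [[[f' fK f'K] f_add] <-]]; exists f'; split; last exact: fK.
split; first by exists f.
by move=> u v; rewrite -{1}(f'K u) -{1}(f'K v) -f_add fK.
Qed.

Lemma aut_equiv_trans (g h u : G) : aut_equiv g h -> aut_equiv h u -> aut_equiv g u.
Proof.
move=> [f1 [[f1_bij f1_add] <-]] [f2 [[f2_bij f2_add] <-]]; exists (f2 \o f1).
by split=> //; split=> [|a b /=]; [exact: bij_comp | rewrite f1_add f2_add].
Qed.

(* G is finite, so an injective additive self-map is an automorphism. *)
Lemma aut_equiv_map (f : G -> G) g : injective f -> additive_map f -> aut_equiv g (f g).
Proof. by move=> f_inj f_add; exists f; split=> //; split=> //; exact: injF_bij. Qed.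

Definition pmul_mem (a t : nat) (g : G) := exists y, gmuln (p ^ t) g = gmuln (p ^ a) y.

Lemma pmul_mem_additive (f : G -> G) a t g : additive_map f -> pmul_mem a t g -> pmul_mem a t (f g).
Proof.
move=> f_add [y yE]; exists (f y).
have [u uE] : exists u, p ^ t = u.+1 by exists (p ^ t).-1; rewrite prednK ?expn_gt0 ?prime_gt0.
have [v vE] : exists v, p ^ a = v.+1 by exists (p ^ a).-1; rewrite prednK ?expn_gt0 ?prime_gt0.
by rewrite uE vE in yE *; rewrite -!(additive_map_muln (f := f)) // yE.
Qed.

Lemma pmul_mem_aut g h : aut_equiv g h -> forall a t, pmul_mem a t g <-> pmul_mem a t h.
Proof.
have pmul_mem_map u v a t : aut_equiv u v -> pmul_mem a t u -> pmul_mem a t v.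
  by move=> [f [[_ f_add] <-]]; exact: pmul_mem_additive.
by move=> gh a t; split; apply: pmul_mem_map => //; exact: aut_equiv_sym.
Qed.

Definition ppow_coords (g : G) := forall x, zero_or_ppow (g x).

Definition obstruction (g : G) a t :=
  exists x s, [/\ val (g x) = p ^ s, t + s < exponent x & t + s < a].

Lemma pmul_memP g a t : ppow_coords g -> pmul_mem a t g <-> ~ obstruction g a t.
Proof.
move=> g_ppow; have coordP x := Zp_pmul_memP p_prime (r_gt0 (tag x)) a t (g_ppow x).
split.
  move=> [y /ffunP yE] [x [s [gx ts_lt_r ts_lt_a]]].
  have := yE x; rewrite !ffunE => yEx.
  by apply: (proj1 (coordP x)); [exists (y x) | exists s].
move=> no_obs.
have coord x : exists yx, (g x *+ p ^ t = yx *+ p ^ a)%R.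
  by apply/coordP => -[s [gx ts_lt_r ts_lt_a]]; apply: no_obs; exists x, s.
have [y yE] := fin_all_exists coord.
by exists (finfun y); apply/ffunP => x; rewrite !ffunE; exact: yE.
Qed.

Lemma pmul_mem_coord g a t x s : ppow_coords g -> pmul_mem a t g ->
  val (g x) = p ^ s -> exponent x <= t + s \/ a <= t + s.
Proof.
move=> g_ppow /(pmul_memP _ _ g_ppow) no_obs gx.
have [|ts_lt_r] := leqP (exponent x) (t + s); first by left.
have [|ts_lt_a] := leqP a (t + s); first by right.
by case: no_obs; exists x, s.
Qed.

(* The coordinate p^sc at c dominates the coordinate p^sd at d: it is
   "higher" in the p-adic sense and has at least the same order. *)
Definition dominates (g : G) (c d : I) := exists sc sd,
  [/\ val (g c) = p ^ sc, val (g d) = p ^ sd, sc <= sd & exponent d - sd <= exponent c - sc].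

Definition separated (g : G) := forall c d, dominates g c d -> c = d.

Definition corner (g : G) R0 s :=
  [/\ ~ pmul_mem R0 (R0 - s - 1) g, pmul_mem R0.+1 (R0 - s) g & pmul_mem (R0 - 1) (R0 - s - 1) g].

(* The corner invariants of a separated element with p-power coordinates
   detect its coordinates: a witness of ~ pmul_mem R0 (R0 - s - 1) is a
   coordinate p^sx with sx <= s in a factor of exponent >= R0, and the two
   other conditions force sx = s and exponent R0; conversely, any coordinate
   contradicting them would dominate the given one. *)
Lemma cornerP g R0 s : ppow_coords g -> separated g -> s < R0 ->
  corner g R0 s <-> exists2 z, exponent z = R0 & val (g z) = p ^ s.
Proof.
move=> g_ppow g_sep s_lt; split.
  move=> [/(pmul_memP _ _ g_ppow)/NNPP [x [sx [gx h1 h2]]] C2 C3].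
  have := pmul_mem_coord g_ppow C2 gx; have := pmul_mem_coord g_ppow C3 gx.
  move=> h3 h4; exists x; first by move: h1 h2 h3 h4; set e := exponent x; lia.
  by rewrite gx; congr (p ^ _); lia.
move=> [z zR gz].
have no_dom x sx : val (g x) = p ^ sx -> sx <= s -> R0 - s <= exponent x - sx -> x = z /\ sx = s.
  move=> gx h1 h2; have xz : x = z by apply: g_sep; exists sx, s; split; rewrite ?zR.
  by split => //; apply: (expn_prime_inj p_prime); rewrite -gx -gz xz.
split.
- by move/(pmul_memP _ _ g_ppow); apply; exists z, s; split; rewrite ?zR //; lia.
- apply/(pmul_memP _ _ g_ppow) => -[x [sx [gx h1 h2]]].
  have [xz sxs] := no_dom x sx gx ltac:(lia) ltac:(lia).
  by move: h1; rewrite xz zR sxs; lia.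
- apply/(pmul_memP _ _ g_ppow) => -[x [sx [gx h1 h2]]].
  have [_ sxs] := no_dom x sx gx ltac:(lia) ltac:(lia).
  by move: h2; rewrite sxs; lia.
Qed.

Definition first_copy (i : 'I_n) : I := existT (fun i => 'I_(k i)) i (Ordinal (k_gt0 i)).

(* Distinct blocks have distinct exponents, so a first copy is determined by
   its exponent. *)
Lemma first_copy_inj (x y : I) : exponent x = exponent y ->
  val (tagged x) = 0 -> val (tagged y) = 0 -> x = y.
Proof.
case: x => i a; case: y => j b /= rij a0 b0.
have ij : i = j.
  by case: (ltngtP i j) => [/r_mono|/r_mono|/val_inj //]; rewrite rij ltnn.
by subst j; congr existT; apply: val_inj; exact: etrans a0 (esym b0).
Qed.

Lemma in_rf_support (g : G) (x : I) : in_rf g -> g x != 0%R -> val (tagged x) = 0.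
Proof. by move=> g_rf; apply: contraNeq; rewrite -lt0n => /g_rf ->. Qed.

(* A representative element is supported on first copies, has p-power
   coordinates, and is separated: by strict monotonicity of values and
   orders, no first-copy coordinate dominates another one. *)
Lemma representative_separated (g : G) :
  representative g -> [/\ in_rf g, ppow_coords g & separated g].
Proof.
have Znz x s := @Zp_ppow_neq0 _ p_prime (r (tag x)) (g x) s.
have Zord x s := @Zp_order_ppow _ p_prime _ (r_gt0 (tag x)) (g x) s.
have p_gt1 := prime_gt1 p_prime.
move=> [g_rf g_first g_mono].
have g_ppow : ppow_coords g.
  move=> x; have [x0|x_pos] := posnP (val (tagged x)); first exact: g_first.
  by left; apply: g_rf.
split=> // c d [sc [sd [gc gd sc_sd ord_dc]]].
have c0 := in_rf_support g_rf (Znz c _ gc); have d0 := in_rf_support g_rf (Znz d _ gd).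
case: (ltngtP (tag c) (tag d)) => [cd|dc|cd].
- have [_] := g_mono c d c0 d0 cd (Znz c _ gc) (Znz d _ gd).
  by rewrite (Zord c _ gc) (Zord d _ gd) ltn_exp2l // ltnNge ord_dc.
- have [] := g_mono d c d0 c0 dc (Znz d _ gd) (Znz c _ gc).
  by rewrite gc gd ltn_exp2l // ltnNge sc_sd.
- by apply: (first_copy_inj _ c0 d0); rewrite (val_inj cd).
Qed.

(* Conversely such an element is representative: for first copies x, y in
   factors r_x < r_y, separation forces both the values and the orders of
   the coordinates to increase. *)
Lemma separated_representative (g : G) :
  in_rf g -> ppow_coords g -> separated g -> representative g.
Proof.
have Zlt x s := @Zp_ppow_lt _ p_prime _ (r_gt0 (tag x)) (g x) s.
have Zord x s := @Zp_order_ppow _ p_prime _ (r_gt0 (tag x)) (g x) s.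
have p_gt1 := prime_gt1 p_prime.
move=> g_rf g_ppow g_sep; split=> [//|x _|x y x0 y0 xy gx_nz gy_nz]; first exact: g_ppow.
have [gx|[sx _ gx]] := g_ppow x; first by rewrite gx eqxx in gx_nz.
have [gy|[sy _ gy]] := g_ppow y; first by rewrite gy eqxx in gy_nz.
have r_xy := r_mono xy.
have x_neq_y : x != y by apply: contraTneq xy => ->; rewrite ltnn.
have sx_sy : sx < sy.
  rewrite ltnNge; apply: contraNN x_neq_y => sy_sx.
  apply/eqP/esym/g_sep; exists sy, sx; split=> //.
  by have := Zlt x _ gx; have := Zlt y _ gy; lia.
rewrite (Zord x _ gx) (Zord y _ gy) gx gy !ltn_exp2l //; split=> //.
rewrite ltnNge; apply: contraNN x_neq_y => ord_yx.
by apply/eqP/g_sep; exists sx, sy; split=> //; exact: ltnW.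
Qed.

(* For representative elements the invariants determine every coordinate:
   a coordinate p^s in a factor of exponent R0 is detected by corner R0 s,
   and a representative has at most one nonzero coordinate per exponent. *)
Lemma coord_of_invariants g h : representative g -> representative h ->
  (forall a t, pmul_mem a t g <-> pmul_mem a t h) ->
  forall x s, val (g x) = p ^ s -> val (h x) = p ^ s.
Proof.
move=> /representative_separated [g_rf g_ppow g_sep].
move=> /representative_separated [h_rf h_ppow h_sep] E x s gx.
have s_lt := Zp_ppow_lt p_prime (r_gt0 (tag x)) gx.
have [Cg1 Cg2 Cg3] : corner g (exponent x) s by apply/cornerP => //; exists x.
have [z zx hz] : exists2 z, exponent z = exponent x & val (h z) = p ^ s.
  by apply/cornerP => //; split; rewrite -E.
suff -> : x = z by [].
apply: first_copy_inj (esym zx) _ _; first exact: in_rf_support g_rf (Zp_ppow_neq0 p_prime gx).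
exact: in_rf_support h_rf (Zp_ppow_neq0 p_prime hz).
Qed.

Lemma representative_invariants_inj g h : representative g -> representative h ->
  (forall a t, pmul_mem a t g <-> pmul_mem a t h) -> g = h.
Proof.
move=> g_rep h_rep E; apply/ffunP => x.
have E' a t : pmul_mem a t h <-> pmul_mem a t g by apply: iff_sym.
have [_ g_ppow _] := representative_separated g_rep.
have [_ h_ppow _] := representative_separated h_rep.
case: (g_ppow x) => [gx|[s _ gx]]; last by apply: val_inj; rewrite gx (coord_of_invariants g_rep h_rep E gx).
case: (h_ppow x) => [-> //|[s _ hx]].
by have := coord_of_invariants h_rep g_rep E' hx; rewrite gx => /(Zp_ppow_neq0 p_prime); rewrite eqxx.
Qed.

Lemma ppow_coords_equiv g : exists2 g', ppow_coords g' & aut_equiv g g'.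
Proof.
have [u uP] := fin_all_exists (fun x => Zp_unit_ppow p_prime (r_gt0 (tag x)) (g x)).
pose scale (h : G) : G := finfun (fun x => h x * u x)%R.
exists (scale g); first by move=> x; rewrite ffunE; case: (uP x).
apply: aut_equiv_map => [a b /ffunP abE|a b]; apply/ffunP => x.
  by have := abE x; rewrite !ffunE; apply: mulIr; case: (uP x).
by rewrite !ffunE mulrDl.
Qed.

(* The transvection adding m times coordinate c to coordinate d.  It is an
   automorphism as soon as multiplication by m is well defined from
   Z_{p^(exponent c)} to Z_{p^(exponent d)}. *)
Definition transvection (c d : I) (m : nat) (g : G) : G :=
  finfun (fun x => if x == d then (g x + (val (g c) * m)%:R)%R else g x).

Lemma transvection_aut c d m g : c != d -> p ^ exponent d %| p ^ exponent c * m ->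
  aut_equiv g (transvection c d m g).
Proof.
move=> c_neq_d dvd_m; apply: aut_equiv_map => [a b /ffunP abE|a b].
  have acE : a c = b c by have := abE c; rewrite !ffunE (negbTE c_neq_d).
  apply/ffunP => x; have := abE x; rewrite !ffunE acE.
  by case: eqP => // _; apply: addIr.
have mul_mod X : (X %% p ^ exponent c * m) %% p ^ exponent d = (X * m) %% p ^ exponent d.
  case/dvdnP: dvd_m => w wE.
  by rewrite {2}(divn_eq X (p ^ exponent c)) mulnDl -mulnA wE mulnA modnMDl.
apply/ffunP => x; rewrite !ffunE; case: eqP => [->|_] //.
rewrite Zp_valD // -(Zp_nat_mod (M_gt1 d)) mul_mod (Zp_nat_mod (M_gt1 d)) mulnDl natrD.
by rewrite -!addrA; congr (_ + _)%R; rewrite addrCA.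
Qed.

Definition zap (d : I) (g : G) : G := finfun (fun y => if y == d then 0%R else g y).

Lemma ppow_coords_zap (d : I) (g : G) : ppow_coords g -> ppow_coords (zap d g).
Proof. by move=> g_ppow y; rewrite ffunE; case: eqP => _; [left | exact: g_ppow]. Qed.

(* A dominated coordinate is killed by a transvection from the dominating
   one: p^sd + p^sc * p^(sd - sc) * (p^(r_d) - 1) = 0 in Z_{p^(r_d)}. *)
Lemma clear_dominated g c d : dominates g c d -> c != d -> aut_equiv g (zap d g).
Proof.
move=> [sc [sd [gc gd sc_sd ord_dc]]] c_neq_d.
have sc_lt := Zp_ppow_lt p_prime (r_gt0 (tag c)) gc.
pose m := p ^ (sd - sc) * (p ^ exponent d - 1).
suff -> : zap d g = transvection c d m g.
  apply: transvection_aut => //; rewrite /m mulnA -expnD.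
  apply: dvdn_mulr; apply: dvdn_exp2l.
  by move: ord_dc sc_lt; set ec := exponent c; set ed := exponent d; lia.
apply/ffunP => x; rewrite !ffunE; case: eqP => [->|//].
rewrite -[g d]Zp_natr_val gd gc -natrD.
have -> : p ^ sd + p ^ sc * m = p ^ sd * p ^ exponent d.
  rewrite /m mulnA -expnD subnKC // mulnBr muln1 addnC subnK //.
  by rewrite leq_pmulr // expn_gt0 prime_gt0.
by rewrite natrM pchar_Zp // mulr0.
Qed.

(* Termination measure of the reduction: nonzero coordinates count 1 in a
   first copy and 2 in a repeated copy. *)
Definition coord_weight (x : I) := (0 < val (tagged x)).+1.

Definition weight (g : G) := \sum_(x : I) (g x != 0%R) * coord_weight x.

Lemma weight_update (g g' : G) (z : I) : (forall y, y != z -> g' y = g y) ->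
  weight g' + (g z != 0%R) * coord_weight z = weight g + (g' z != 0%R) * coord_weight z.
Proof.
move=> gg'E; rewrite /weight (bigD1 z) //= [in RHS](bigD1 z) //=.
set S := (X in _ + X + _ = _); set T := (X in _ = _ + X + _).
have -> : S = T by apply: eq_bigr => y /gg'E ->.
by rewrite addnAC [RHS]addnAC; congr (_ + _); exact: addnC.
Qed.

Lemma weight_zap (g : G) (d : I) : g d != 0%R -> weight (zap d g) + coord_weight d = weight g.
Proof.
move=> gd_nz; have := @weight_update g (zap d g) d; rewrite ffunE eqxx gd_nz /= mul1n addn0.
by apply=> y /negbTE y_neq_d; rewrite ffunE y_neq_d.
Qed.

Lemma clear_step (g : G) (c d : I) : ppow_coords g -> dominates g c d -> c != d ->
  exists2 g', ppow_coords g' & aut_equiv g g' /\ weight g' < weight g.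
Proof.
move=> g_ppow cd c_neq_d; exists (zap d g); first exact: ppow_coords_zap.
split; first exact: clear_dominated cd c_neq_d.
have [_ [sd [_ gd _ _]]] := cd.
by rewrite -(weight_zap (Zp_ppow_neq0 p_prime gd)) -addn1 leq_add2l.
Qed.

(* Moving a coordinate p^s of a repeated copy to the (zero) first copy of the
   same factor, by the transvection x0 += x followed by clearing x. *)
Lemma move_step (g : G) (x : I) s : ppow_coords g -> 0 < val (tagged x) ->
  val (g x) = p ^ s -> g (first_copy (tag x)) = 0%R ->
  exists2 g', ppow_coords g' & aut_equiv g g' /\ weight g' < weight g.
Proof.
move=> g_ppow x_pos gx gx0; set x0 := first_copy (tag x).
have x0_neq_x : x0 != x by apply: contraTneq x_pos => <-.
pose g1 := transvection x x0 1 g.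
have g1x : g1 x = g x by rewrite ffunE eq_sym (negbTE x0_neq_x).
have g1x0 : val (g1 x0) = p ^ s.
  by rewrite ffunE eqxx gx0 add0r muln1 (Zp_val_nat (M_gt1 x)) modn_small ?Zp_val_lt.
have g1_ppow : ppow_coords g1.
  move=> y; case: (eqVneq y x0) => [->|y_neq_x0]; last by rewrite ffunE (negbTE y_neq_x0).
  by right; exists s => //; apply: (Zp_ppow_lt p_prime (r_gt0 (tag x0)) g1x0).
have e1 : aut_equiv g g1 by apply: transvection_aut; rewrite 1?eq_sym ?muln1.
have e2 : aut_equiv g1 (zap x g1) by apply: clear_dominated x0_neq_x; exists s, s; rewrite g1x.
exists (zap x g1); first exact: ppow_coords_zap.
split; first exact: aut_equiv_trans e1 e2.
have weight_g1 : weight g1 = weight g + coord_weight x0.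
  have := @weight_update g g1 x0; rewrite gx0 eqxx (Zp_ppow_neq0 p_prime g1x0) /= mul1n addn0.
  by apply=> y /negbTE y_neq_x0; rewrite ffunE y_neq_x0.
have := weight_zap (Zp_ppow_neq0 p_prime (etrans (congr1 val g1x) gx)).
by rewrite weight_g1 /coord_weight /= x_pos; lia.
Qed.

(* A non-representative element with coordinates 0 or powers of p either has
   a dominated coordinate or, being separated, a nonzero coordinate in a
   repeated copy whose first copy is zero. *)
Lemma reduce_step (g : G) : ppow_coords g -> ~ representative g ->
  exists2 g', ppow_coords g' & aut_equiv g g' /\ weight g' < weight g.
Proof.
move=> g_ppow not_rep.
have [g_sep|not_sep] := classic (separated g); last first.
  have [c [d [cd c_neq_d]]] : exists c d, dominates g c d /\ c != d.
    apply: NNPP => no_pair; apply: not_sep => c d cd; apply/eqP; apply: contraT => c_neq_d.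
    by case: no_pair; exists c, d.
  exact: clear_step g_ppow cd c_neq_d.
have [x [x_pos gx_nz]] : exists x : I, 0 < val (tagged x) /\ g x != 0%R.
  apply: NNPP => all_rf; apply: not_rep; apply: separated_representative => // x x_pos.
  by apply/eqP; apply: contraT => gx_nz; case: all_rf; exists x.
have [gx|[s _ gx]] := g_ppow x; first by rewrite gx eqxx in gx_nz.
apply: (move_step g_ppow x_pos gx); set x0 := first_copy (tag x).
have [//|[s0 _ gx0]] := g_ppow x0.
have x0_neq_x : x0 != x by apply: contraTneq x_pos => <-.
case/eqP: x0_neq_x; have [s0_s|s_s0] := leqP s0 s.
  by apply: g_sep; exists s0, s; split=> //; exact: leq_sub2l.
by apply/esym/g_sep; exists s, s0; split=> //; [exact: ltnW | exact: leq_sub2l (ltnW s_s0)].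
Qed.

Lemma representative_of_ppow_coords N (g : G) : weight g < N -> ppow_coords g ->
  exists2 h, representative h & aut_equiv g h.
Proof.
elim: N g => // N IHN g g_lt g_ppow.
have [g_rep|not_rep] := classic (representative g); first by exists g => //; exact: aut_equiv_refl.
have [g' g'_ppow [gg' g'_lt]] := reduce_step g_ppow not_rep.
have [h h_rep g'h] := IHN g' (leq_trans g'_lt g_lt) g'_ppow.
by exists h => //; exact: aut_equiv_trans gg' g'h.
Qed.

Lemma exists_representative (g : G) : exists2 h, representative h & aut_equiv g h.
Proof.
have [g1 g1_ppow gg1] := ppow_coords_equiv g.
have [h h_rep g1h] := representative_of_ppow_coords (ltnSn (weight g1)) g1_ppow.
by exists h => //; exact: aut_equiv_trans gg1 g1h.
Qed.

Lemma representative_aut_inj (g h : G) : representative g -> representative h ->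
  aut_equiv g h -> g = h.
Proof.
move=> g_rep h_rep gh; apply: representative_invariants_inj => //.
exact: pmul_mem_aut.
Qed.

End Representatives.

Theorem mainTheorem5 (p n : nat) (r k : 'I_n -> nat) :
  prime p ->
  (forall i : 'I_n, 0 < r i) ->
  (forall i j : 'I_n, i < j -> r i < r j) ->
  (forall i : 'I_n, 0 < k i) ->
  (forall g h : Gp p r k,
      representative g -> representative h -> aut_equiv g h -> g = h) /\
  (forall g : Gp p r k, exists! h : Gp p r k, representative h /\ aut_equiv g h).
Proof.
move=> p_prime r_gt0 r_mono k_gt0.
have rep_inj := representative_aut_inj p_prime r_gt0 r_mono.
split=> [|g]; first exact: rep_inj.
have [h h_rep gh] := exists_representative p_prime r_gt0 r_mono k_gt0 g.
exists h; split=> [|h' [h'_rep gh']]; first by split.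
by apply: rep_inj => //; exact: aut_equiv_trans (aut_equiv_sym gh) gh'.
Qed.
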